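(* Let $(I,H)$ be a finite graph without edge loops with an admissible automorphism $a$ and an $a$-stable orientation $\Omega$ without oriented cycles, let $\mathbf n$ be a common multiple of all orbit sizes $d_i$ ($i\in I$) and $d_h$ ($h\in H$), and let $(\widetilde I,\widetilde H,\widetilde\Omega)$ with automorphism $\widetilde a$ be the split-quotient quiver of $(I,H,\Omega,a,\mathbf n)$. Then the Cartan matrix associated to $(\widetilde I,\widetilde H,\widetilde a)$ (with rows and columns indexed by the representatives $(i,1)$, $i\in\widehat I$) is the transpose of the Cartan matrix associated to $(I,H,a)$: $c_{(i,1)(j,1)}=c_{ji}$ for all $i,j\in\widehat I$.
   Context: Graph conventions: $I$ is the vertex set, $H$ the set of edges with an orientation (each edge appears twice), $s,t:H\to I$ source/target, $h\mapsto\bar h$ reversal; an orientation is $\Omega\subset H$ with $H=\Omega\sqcup\bar\Omega$. An admissible automorphism $a$ consists of permutations of $I$ and $H$ with $s(a(h))=a(s(h))$, $t(a(h))=a(t(h))$, $\overline{a(h)}=a(\bar h)$, such that no two adjacent vertices lie in the same $\langle a\rangle$-orbit; we assume $a(\Omega)=\Omega$. $d_i$ (resp. $d_h$) is the size of the $\langle a\rangle$-orbit of $i$ (resp. $h$); $e_i=\mathbf n/d_i$, $e_h=\mathbf n/d_h$. Split-quotient quiver: let $\widehat I$ be a set of representatives of $\langle a\rangle$-orbits in $I$, $\widehat H$ the set of $\langle a\rangle$-orbits in $H$, $\widehat\Omega$ those in $\Omega$; for $\widehat h=\langle a\rangle h$ let $s(\widehat h)$, $t(\widehat h)$ be the representatives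 of the orbits of $s(h),t(h)$, $e_{\widehat h}=e_h$, $\overline{\widehat h}=\langle a\rangle\bar h$. Put $\widetilde I=\{(i,\zeta):i\in\widehat I,\ \zeta\in\mu_{e_i}\}$ ($\mu_e$ the complex $e$-th roots of unity), $\widetilde H=\{(\widehat h,\zeta,\zeta'):\widehat h\in\widehat H,\zeta\in\mu_{e_{s(\widehat h)}},\zeta'\in\mu_{e_{t(\widehat h)}},\ \zeta^{e_{s(\widehat h)}/e_{\widehat h}}=\zeta'^{\,e_{t(\widehat h)}/e_{\widehat h}}\}$, $s(\widehat h,\zeta,\zeta')=(s(\widehat h),\zeta)$, $t(\widehat h,\zeta,\zeta')=(t(\widehat h),\zeta')$, $\overline{(\widehat h,\zeta,\zeta')}=(\overline{\widehat h},\zeta',\zeta)$, $\widetilde\Omega=\{(\widehat h,\zeta,\zeta'):\widehat h\in\widehat\Omega\}$. Fixing a primitive $\mathbf n$-th root of unity $\eta$, $\widetilde a(i,\zeta)=(i,\zeta\eta^{d_i})$, $\widetilde a(\widehat h,\zeta,\zeta')=(\widehat h,\zeta\eta^{d_{s(\widehat h)}},\zeta'\eta^{d_{t(\widehat h)}})$; this is an admissible automorphism and $\{(i,1):i\in\widehat I\}$ is a set of orbit representatives in $\widetilde I$. Cartan matrix of $(I,H,a)$: indexed by $\widehat I$, $c_{ii}=2$ and for $i\ne j$, $-c_{ij}=d_i^{-1}\,|\{h\in H: s(h)\in\langle a\rangle i,\ t(h)\in\langle a\rangle j\}|$; similarly for $(\widetilde I,\widetilde H,\widetilde a)$ using orbit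 sizes of $\widetilde a$. *)

From HB Require Import structures.
From mathcomp Require Import all_boot all_order all_algebra all_fingroup all_field.
Set Implicit Arguments. Unset Strict Implicit. Unset Printing Implicit Defensive.
Import Order.TTheory GRing.Theory Num.Theory.

Definition cartan (V E : finType) (src tgt : E -> V) (aV : V -> V) (i j : V)
  : rat :=
  if i == j then 2%:R%R
  else (- ((#|[set h | fconnect aV i (src h) & fconnect aV j (tgt h)]|)%:R
          / (fingraph.order aV i)%:R))%R.

Section Graph.
Variables (I H : finType) (s t : H -> I) (bar : H -> H).

Definition is_graph : Prop :=
  [/\ involutive bar, (forall h, bar h != h) & (forall h, s (bar h) = t h)].

Definition no_loops : Prop := forall h, s h != t h.

Variables (aI : {perm I}) (aH : {perm H}).

Definition admissible : Prop :=
  [/\ (forall h, s (aH h) = aI (s h)), (forall h, t (aH h) = aI (t h)),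
      (forall h, bar (aH h) = aH (bar h)) &
      (forall h, ~~ fconnect aI (s h) (t h))].

Definition orientation (O : {set H}) : Prop :=
  forall h, (h \in O) != (bar h \in O).

Definition a_stable (O : {set H}) : Prop := forall h, (aH h \in O) = (h \in O).

Definition oriented_rel (O : {set H}) : rel I :=
  fun x y => [exists h, [&& h \in O, s h == x & t h == y]].

Definition no_oriented_cycles (O : {set H}) : Prop :=
  forall h, h \in O -> ~~ connect (oriented_rel O) (t h) (s h).

Definition common_multiple (n : nat) : Prop :=
  [/\ 0 < n, (forall i, fingraph.order aI i %| n) & (forall h, fingraph.order aH h %| n)]%N.

End Graph.

(* rep : T -> T picks a representative of each <f>-orbit; the set of
   representatives is the image of rep *)
Definition orbit_repr (T : finType) (f : T -> T) (rep : T -> T) : Prop :=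
  (forall x, fconnect f x (rep x)) /\
  (forall x y, fconnect f x y -> rep x = rep y).

Section SplitQuotient.
Variables (I H : finType) (s t : H -> I).
Variables (aI : {perm I}) (aH : {perm H}).
Variables (rep : I -> I) (hrep : H -> H) (n : nat) (eta : algC).

Definition dI (i : I) : nat := fingraph.order aI i.
Definition dH (h : H) : nat := fingraph.order aH h.
Definition eI (i : I) : nat := (n %/ dI i)%N.
Definition eH (h : H) : nat := (n %/ dH h)%N.

(* hat I = set of representatives of <a>-orbits in I;
   hat H = <a>-orbits of H, each given by its representative *)
Definition hatI : {set I} := [set rep i | i in I].
Definition hatH : {set H} := [set hrep h | h in H].

(* the complex n-th roots of unity eta^k (eta a primitive n-th root) *)
Definition mun : finType := seq_sub [seq (eta ^+ k)%R | k <- iota 0 n].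

Definition tI_pred (p : I * mun) : bool :=
  (p.1 \in hatI) && ((ssval p.2) ^+ (eI p.1) == 1)%R.
Definition tI : finType := {p : I * mun | tI_pred p}.

Definition tH_pred (q : H * mun * mun) : bool :=
  let h := q.1.1 in
  let es := eI (rep (s h)) in
  let et := eI (rep (t h)) in
  [&& h \in hatH, ((ssval q.1.2) ^+ es == 1)%R, ((ssval q.2) ^+ et == 1)%R &
      ((ssval q.1.2) ^+ (es %/ eH h) == (ssval q.2) ^+ (et %/ eH h))%R].
Definition tH : finType := {q : H * mun * mun | tH_pred q}.

Lemma tsrc_subproof (x : tH) : tI_pred (rep (s (val x).1.1), (val x).1.2).
Proof.
case: x => [[[h z] z']] /= /and4P [_ hz _ _].
by rewrite /tI_pred /= hz andbT; apply/imsetP; exists (s h).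
Qed.

Lemma ttgt_subproof (x : tH) : tI_pred (rep (t (val x).1.1), (val x).2).
Proof.
case: x => [[[h z] z']] /= /and4P [_ _ hz' _].
by rewrite /tI_pred /= hz' andbT; apply/imsetP; exists (t h).
Qed.

Definition tsrc (x : tH) : tI := Sub _ (tsrc_subproof x).
Definition ttgt (x : tH) : tI := Sub _ (ttgt_subproof x).

(* tilde a (i, zeta) = (i, zeta * eta^(d_i)).  (insubd only supplies a
   fallback value for the never-occurring case that the product is not
   a valid vertex.) *)
Definition ta (x : tI) : tI :=
  let i := (val x).1 in
  let z := (val x).2 in
  insubd x (i, insubd z (ssval z * eta ^+ dI i)%R : mun).

End SplitQuotient.

From Pilot Require Import Defs.
From HB Require Import structures.
From mathcomp Require Import all_boot all_order all_algebra all_fingroup all_field.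
Import Order.TTheory GRing.Theory Num.Theory.
Set Implicit Arguments. Unset Strict Implicit. Unset Printing Implicit Defensive.

(* The [a~]-orbit of [(i, 1)] is the whole fiber [{(i, zeta) | zeta ^ e_i = 1}], of size
   [e_i].  Over an edge orbit from [i] to [j], write [d_h = p d_i = r d_j] and
   [n = m d_h]; the edges of the split-quotient quiver are then the pairs
   [(zeta, zeta')] with [zeta ^ (m p) = zeta' ^ (m r) = 1] and [zeta ^ p = zeta' ^ r],
   and there are [m p r = e_i d_h / d_j] of them.  Since the sizes [d_h] of the edge
   orbits from [i] to [j] add up to the number of edges from [<a>i] to [<a>j], the
   split-quotient entry is [- d_j^-1 #{h | s h in <a>i, t h in <a>j}], and reversing
   edges turns this into [c_ji]. *)

Lemma card_in_bij (A B : finType) (f : A -> B) (P : {pred A}) (Q : {pred B}) :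
  {in P &, injective f} -> {in P, forall a, f a \in Q} ->
  {in Q, forall b, exists2 a, a \in P & b = f a} -> #|Q| = #|P|.
Proof.
move=> injf PQ QP; rewrite -(card_in_imset injf); apply: eq_card => b.
apply/idP/imsetP => [/QP [a aP ->] | [a aP ->]]; first by exists a.
exact: PQ.
Qed.

Lemma sum_nat_pred_card (T : finType) (P : pred T) : \sum_(x : T) (P x : nat) = #|P|.
Proof.
rewrite -sum1_card [RHS]big_mkcond; apply: eq_bigr => x _.
by rewrite unfold_in; case: (P x).
Qed.

Lemma card_prod_fibers (A B : finType) (F : pred (A * B)) :
  #|F| = \sum_(a : A) #|[pred b | F (a, b)]|.
Proof.
under eq_bigr do rewrite -sum_nat_pred_card.
by rewrite pair_bigA -sum_nat_pred_card; apply: eq_bigr => -[].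
Qed.

Lemma card_prod3_fibers (A B C : finType) (F : pred (A * B * C)) :
  #|F| = \sum_(a : A) #|[pred bc : B * C | F (a, bc.1, bc.2)]|.
Proof.
rewrite -sum_nat_pred_card.
transitivity (\sum_(a : A) \sum_(b : B) \sum_(c : C) (F (a, b, c) : nat)).
  rewrite (pair_bigA _ (fun a b => \sum_(c : C) (F (a, b, c) : nat))).
  by rewrite (pair_bigA _ (fun ab c => F (ab.1, ab.2, c) : nat)); apply: eq_bigr => -[[]].
apply: eq_bigr => a _; rewrite -sum_nat_pred_card.
by rewrite (pair_bigA _ (fun b c => F (a, b, c) : nat)); apply: eq_bigr => -[].
Qed.

Lemma count_iota_modn q m r : r < q ->
  count (fun k => k %% q == r) (iota 0 (m * q)) = m.
Proof.
move=> rq; elim: m => [|m IHm]; first by rewrite mul0n.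
rewrite mulSn addnC iotaD count_cat IHm add0n -[m * q]addn0 iotaDl count_map.
rewrite (@eq_in_count _ _ (pred1 r)) => [|k]; last first.
  by rewrite mem_iota /= => kq; rewrite modnMDl modn_small.
have := count_uniq_mem r (iota_uniq 0 q); rewrite mem_iota rq /= => ->.
by rewrite addn1.
Qed.

Lemma card_edges_reverse (I H : finType) (s t : H -> I) (bar : H -> H) (P Q : pred I) :
    involutive bar -> (forall h, s (bar h) = t h) ->
  #|[set h | P (s h) & Q (t h)]| = #|[set h | Q (s h) & P (t h)]|.
Proof.
move=> barK bar_s; have bar_t h : t (bar h) = s h by rewrite -{2}(barK h) bar_s.
rewrite -(card_imset _ (can_inj barK)); apply: eq_card => h.
by rewrite -{1}(barK h) (mem_imset _ _ (can_inj barK)) !inE bar_s bar_t andbC.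
Qed.

Section PermOrbits.
Variables (T : finType) (f : {perm T}).

Lemma fconnect_perm_sym x y : fconnect f x y = fconnect f y x.
Proof. exact/fconnect_sym/perm_inj. Qed.

Lemma order_perm_fconnect x y : fconnect f x y -> fingraph.order f x = fingraph.order f y.
Proof. by move=> fxy; apply/eq_card/same_connect => // a b; apply: fconnect_perm_sym. Qed.

Lemma order_dvdn_iter x m : iter m f x = x -> fingraph.order f x %| m.
Proof.
set o := fingraph.order f x => fixm.
have iter_mul q : iter (q * o) f x = x.
  by elim: q => // q IHq; rewrite mulSn iterD IHq (iter_order (@perm_inj _ f)).
move: fixm; rewrite {1}(divn_eq m o) addnC iterD iter_mul => fixr.
have := findex_iter (ltn_pmod m (fingraph.order_gt0 f x)).
by rewrite fixr findex0 /dvdn => <-.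
Qed.

Variable rep : T -> T.
Hypothesis orep : orbit_repr f rep.

Lemma eq_orbit_repr x y : (rep x == rep y) = fconnect f x y.
Proof.
apply/eqP/idP => [eq_rep | /orep.2 //].
by apply: connect_trans (orep.1 x) _; rewrite eq_rep fconnect_perm_sym; apply: orep.1.
Qed.

Lemma orbit_repr_fixed x : x \in [set rep y | y in T] -> rep x = x.
Proof. by case/imsetP => y _ ->; apply/esym/orep.2/orep.1. Qed.

Lemma fconnect_orbit_repr x0 x :
  x0 \in [set rep y | y in T] -> fconnect f x0 x = (rep x == x0).
Proof. by move=> /orbit_repr_fixed rx0; rewrite -eq_orbit_repr rx0 eq_sym. Qed.

Lemma card_invariant_orbit_sum (c : pred T) :
    (forall x y, fconnect f x y -> c x = c y) ->
  #|c| = \sum_(x0 in [set rep x | x in T]) c x0 * fingraph.order f x0.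
Proof.
move=> c_inv; rewrite -sum_nat_pred_card.
rewrite (partition_big rep (mem [set rep x | x in T])) => [|x _]; last exact: imset_f.
apply: eq_bigr => x0 x0rep; rewrite (eq_bigl (fconnect f x0)) => [|x].
  rewrite (eq_bigr (fun _ => c x0 : nat)) => [|x /c_inv -> //].
  by rewrite sum_nat_const mulnC.
by rewrite /= fconnect_orbit_repr.
Qed.

End PermOrbits.

Section PermMorphism.
Variables (T U : finType) (f : {perm T}) (g : {perm U}) (phi : T -> U).
Hypothesis phiK : forall x, phi (f x) = g (phi x).

Lemma iter_perm_morph k x : phi (iter k f x) = iter k g (phi x).
Proof. by elim: k => //= k <-. Qed.

Lemma fconnect_perm_morph x y : fconnect f x y -> fconnect g (phi x) (phi y).
Proof. by move/iter_findex => <-; rewrite iter_perm_morph; apply: fconnect_iter. Qed.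

Lemma order_perm_morph_dvdn x : fingraph.order g (phi x) %| fingraph.order f x.
Proof. by apply: order_dvdn_iter; rewrite -iter_perm_morph (iter_order (@perm_inj _ f)). Qed.

End PermMorphism.

Section RootsOfUnity.
Variables (n : nat) (eta : algC).
Hypothesis prim : (n.-primitive_root eta)%R.
Local Open Scope ring_scope.
Local Notation powers := [seq eta ^+ k | k <- iota 0 n].

Lemma mem_powers (w : algC) : w \in powers -> exists2 k, (k < n)%N & w = eta ^+ k.
Proof. by case/mapP => k; rewrite mem_iota => /andP[_ kn] ->; exists k. Qed.

Lemma mun_mulX_mem (z : mun n eta) k : ssval z * eta ^+ k \in powers.
Proof.
have [k0 _ ->] := mem_powers (ssvalP z).
rewrite -exprD -(prim_expr_mod prim); apply: map_f.
by rewrite mem_iota /= ltn_pmod // (prim_order_gt0 prim).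
Qed.

Lemma uniq_powers : uniq powers.
Proof.
rewrite map_inj_in_uniq ?iota_uniq // => a b; rewrite !mem_iota /= => an bn /eqP.
by rewrite (eq_prim_root_expr prim) !modn_small // => /eqP.
Qed.

Lemma card_mun (Q : pred algC) :
  #|[pred z : mun n eta | Q (ssval z)]| = count (fun k => Q (eta ^+ k)) (iota 0 n).
Proof.
rewrite cardE /enum_mem size_filter -enumT.
have enumE : perm_eq (enum (mun n eta)) (seq_sub_enum powers).
  apply: uniq_perm; [exact: enum_uniq | exact: undup_uniq | move=> z].
  by rewrite mem_enum mem_seq_sub_enum.
rewrite (seq.permP enumE) -(count_map val Q (seq_sub_enum powers)).
by rewrite val_seq_sub_enum ?uniq_powers // count_map.
Qed.

Lemma card_mun_expr c b : (c %| n)%N -> (c %| b)%N ->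
  #|[pred z : mun n eta | ssval z ^+ c == eta ^+ b]| = c.
Proof.
move=> cn /dvdnP[a ->]; rewrite (card_mun (fun w => w ^+ c == eta ^+ (a * c))).
have n_gt0 := prim_order_gt0 prim.
have c_gt0 : (0 < c)%N by apply: dvdn_gt0 n_gt0 cn.
set q := (n %/ c)%N; have nE : n = (c * q)%N by rewrite mulnC divnK.
have q_gt0 : (0 < q)%N by move: n_gt0; rewrite nE muln_gt0 => /andP[].
rewrite (@eq_count _ _ (fun k => k %% q == a %% q)%N) => [|k /=].
  by rewrite nE count_iota_modn // ltn_pmod.
rewrite -exprM (eq_prim_root_expr prim) {1 2}nE [(c * q)%N]mulnC -!muln_modl.
by rewrite eqn_pmul2r.
Qed.

Lemma card_mun_unity c : (c %| n)%N -> #|[pred z : mun n eta | ssval z ^+ c == 1]| = c.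
Proof. by move=> cn; rewrite -[RHS](card_mun_expr cn (dvdn0 c)) expr0. Qed.

(* For fixed [z], [z ^+ p] is an [m]-th root of unity, so it has exactly [r] [r]-th roots. *)
Lemma card_mun_pairs m p r : (m * p %| n)%N -> (m * r %| n)%N ->
  #|[pred zz : mun n eta * mun n eta | [&& ssval zz.1 ^+ (m * p) == 1,
      ssval zz.2 ^+ (m * r) == 1 & ssval zz.1 ^+ p == ssval zz.2 ^+ r]]| = (m * p * r)%N.
Proof.
move=> mpn mrn; have m_gt0 : (0 < m)%N.
  by move: (dvdn_gt0 (prim_order_gt0 prim) mpn); rewrite muln_gt0 => /andP[].
rewrite card_prod_fibers.
rewrite (eq_bigr (fun z : mun n eta => ((ssval z ^+ (m * p) == 1%R) : nat) * r)%N) => [|z _].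
  by rewrite -big_distrl sum_nat_pred_card card_mun_unity.
have [unit_z | ] := boolP (ssval z ^+ (m * p) == 1); last first.
  by move/negbTE => nunit_z; apply: eq_card0 => z'; rewrite !inE /= nunit_z.
have [k _ zE] := mem_powers (ssvalP z).
have r_dvd_kp : (r %| k * p)%N.
  have: (n %| k * (m * p))%N by rewrite (prim_order_dvd prim) exprM -zE.
  by move/(dvdn_trans mrn); rewrite mulnCA dvdn_pmul2l.
have r_dvd_n : (r %| n)%N by apply: dvdn_trans mrn; apply: dvdn_mull.
rewrite mul1n -[RHS](card_mun_expr r_dvd_n r_dvd_kp).
apply: eq_card => z'; rewrite !inE /= unit_z /= zE -exprM.
apply/andP/idP => [[_ /eqP <-] // | /eqP z'E]; split; last by rewrite z'E.
by rewrite mulnC exprM z'E -exprM -mulnA [(p * m)%N]mulnC exprM -zE.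
Qed.

End RootsOfUnity.

Section SplitQuotient.
Variables (I H : finType) (s t : H -> I) (aI : {perm I}) (aH : {perm H}).
Variables (rep : I -> I) (hrep : H -> H) (n : nat) (eta : algC).
Hypothesis prim : (n.-primitive_root eta)%R.
Hypothesis dvdIn : forall i, fingraph.order aI i %| n.
Hypothesis dvdHn : forall h, fingraph.order aH h %| n.
Hypothesis s_aH : forall h, s (aH h) = aI (s h).
Hypothesis t_aH : forall h, t (aH h) = aI (t h).
Hypothesis orep : orbit_repr aI rep.
Hypothesis ohrep : orbit_repr aH hrep.

Local Notation tI := (@tI I aI rep n eta).
Local Notation tH := (@tH I H s t aI aH rep hrep n eta).
Local Notation tH_pred := (@tH_pred I H s t aI aH rep hrep n eta).
Local Notation ta := (@ta I aI rep n eta).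
Local Notation tsrc := (@tsrc I H s t aI aH rep hrep n eta).
Local Notation ttgt := (@ttgt I H s t aI aH rep hrep n eta).

Lemma dI_mul_eI i : dI aI i * eI aI n i = n.
Proof. by rewrite mulnC divnK ?dvdIn. Qed.

Lemma eI_gt0 i : 0 < eI aI n i.
Proof. by rewrite /eI /dI divn_gt0 ?fingraph.order_gt0 // dvdn_leq ?(prim_order_gt0 prim). Qed.

Lemma val_ta (x : tI) :
  (val (ta x)).1 = (val x).1 /\
  ssval (val (ta x)).2 = (ssval (val x).2 * eta ^+ dI aI (val x).1)%R.
Proof.
rewrite /Defs.ta; set z := insubd (val x).2 _.
have zE : ssval z = (ssval (val x).2 * eta ^+ dI aI (val x).1)%R.
  by rewrite /z insubdK //; apply: (mun_mulX_mem prim).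
have tI_z : tI_pred aI rep ((val x).1, z).
  have /andP[x_rep x_unit] := valP x.
  rewrite /tI_pred /= x_rep zE exprMn (eqP x_unit) mul1r -exprM.
  by rewrite dI_mul_eI (prim_expr_order prim) eqxx.
by rewrite (insubdK _ tI_z).
Qed.

Lemma val_iter_ta (x : tI) m :
  (val (iter m ta x)).1 = (val x).1 /\
  ssval (val (iter m ta x)).2 = (ssval (val x).2 * eta ^+ (dI aI (val x).1 * m))%R.
Proof.
elim: m => [|m [IH1 IH2]]; first by rewrite muln0 expr0 mulr1.
have [ta1 ta2] := val_ta (iter m ta x).
by rewrite iterS ta1 IH1 ta2 IH1 IH2 -mulrA -exprD mulnS addnC.
Qed.

Section UnitFiber.
Variable x : tI.
Hypothesis x1 : ssval (val x).2 = 1%R.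

(* The orbit of [(i, 1)] is the whole fiber over [i], since each [e_i]-th root of unity
   is a power of [eta ^+ d_i]. *)
Lemma fconnect_ta z : fconnect ta x z = ((val z).1 == (val x).1).
Proof.
apply/idP/idP => [xz | ].
  rewrite (@fconnect_invariant _ ta _ (fun z : tI => (val z).1) _ x z xz) //.
  by move=> y; apply/eqP; exact: (val_ta y).1.
case: z => [[i w] tI_w] /= /eqP iE; have /andP[_ w_unit] := tI_w.
have [k _ wE] := mem_powers (ssvalP w).
have : n %| k * eI aI n i by rewrite (prim_order_dvd prim) exprM -wE.
rewrite -{1}(dI_mul_eI i) dvdn_pmul2r ?eI_gt0 // => /dvdnP[m kE].
have [iter1 iter2] := val_iter_ta x m.
suff -> : exist _ (i, w) tI_w = iter m ta x by apply: fconnect_iter.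
apply: val_inj; rewrite /= [val (iter m ta x)]surjective_pairing iter1 -iE; congr pair.
by apply: val_inj; rewrite /= iter2 x1 mul1r wE kE iE mulnC.
Qed.

Lemma order_ta : fingraph.order ta x = eI aI n (val x).1.
Proof.
rewrite /fingraph.order; set i := (val x).1.
have i_rep : i \in hatI rep by have /andP[] := valP x.
rewrite (@eq_card _ _ [pred z : tI | (val z).1 == i]) => [|z]; last first.
  by rewrite !inE /= fconnect_ta.
have tI_w (w : mun n eta) : (ssval w ^+ eI aI n i == 1)%R -> tI_pred aI rep (i, w).
  by rewrite /tI_pred /= i_rep.
rewrite (@card_in_bij _ _ (fun w => insubd x (i, w))
   [pred w : mun n eta | ssval w ^+ eI aI n i == 1]%R).
- by rewrite (card_mun_unity prim) //; apply/dvdnP; exists (dI aI i); rewrite dI_mul_eI.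
- move=> w1 w2; rewrite !inE => w1_unit w2_unit /(congr1 val).
  by rewrite !(insubdK _ (tI_w _ _)) // => -[].
- by move=> w; rewrite !inE => w_unit; rewrite (insubdK _ (tI_w _ w_unit)).
- move=> z; rewrite inE => /eqP zi; have /andP[_] := valP z; rewrite /= zi => z_unit.
  exists (val z).2; first by rewrite inE.
  by apply: val_inj; rewrite (insubdK _ (tI_w _ _)) // [val z]surjective_pairing zi.
Qed.

End UnitFiber.

Lemma eq_tI_unit (x y : tI) : ssval (val x).2 = 1%R -> ssval (val y).2 = 1%R ->
  (x == y) = ((val y).1 == (val x).1).
Proof.
move=> x1 y1; apply/eqP/eqP => [-> // | eq_xy]; apply: val_inj.
move: x y x1 y1 eq_xy => [[i z] ?] [[j w] ?] /= z1 w1 ->; congr pair.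
by apply: val_inj; rewrite /= z1 w1.
Qed.

(* With [d_h = p d_(s h) = r d_(t h)] and [n = m d_h] the conditions on [(zeta, zeta')]
   read [zeta ^ (m p) = zeta' ^ (m r) = 1] and [zeta ^ p = zeta' ^ r]. *)
Lemma card_tH_fiber h : h \in hatH hrep ->
  #|[pred zz : mun n eta * mun n eta | tH_pred (h, zz.1, zz.2)]| * dI aI (rep (t h))
  = eI aI n (rep (s h)) * dH aH h.
Proof.
move=> h_rep.
have dI_rep i : dI aI (rep i) = fingraph.order aI i.
  by rewrite /dI -(order_perm_fconnect (orep.1 i)).
have [p dhE] := dvdnP (order_perm_morph_dvdn s_aH h).
have [r dhE'] := dvdnP (order_perm_morph_dvdn t_aH h).
have [m nE] := dvdnP (dvdHn h).
have m_gt0 : 0 < m by move: (prim_order_gt0 prim); rewrite nE muln_gt0 => /andP[].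
have esE : eI aI n (rep (s h)) = m * p by rewrite /eI dI_rep nE dhE mulnA mulnK.
have etE : eI aI n (rep (t h)) = m * r by rewrite /eI dI_rep nE dhE' mulnA mulnK.
have ehE : eH aH n h = m by rewrite /eH /dH nE mulnK.
have mpn : m * p %| n by rewrite nE dhE mulnA dvdn_mulr.
have mrn : m * r %| n by rewrite nE dhE' mulnA dvdn_mulr.
rewrite (eq_card (B := [pred zz : mun n eta * mun n eta | [&& ssval zz.1 ^+ (m * p) == 1,
    ssval zz.2 ^+ (m * r) == 1 & ssval zz.1 ^+ p == ssval zz.2 ^+ r]]%R)); last first.
  by move=> zz; rewrite !inE /tH_pred /= h_rep esE etE ehE !mulKn.
by rewrite (card_mun_pairs prim mpn mrn) esE dI_rep /dH dhE' -!mulnA.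
Qed.

Lemma card_tH_edges (x y : tI) : ssval (val x).2 = 1%R -> ssval (val y).2 = 1%R ->
  #|[set e : tH | fconnect ta x (tsrc e) & fconnect ta y (ttgt e)]| * dI aI (val y).1
  = eI aI n (val x).1 * #|[set h | fconnect aI (val x).1 (s h) & fconnect aI (val y).1 (t h)]|.
Proof.
move=> x1 y1; set i := (val x).1; set j := (val y).1.
have i_rep : i \in hatI rep by have /andP[] := valP x.
have j_rep : j \in hatI rep by have /andP[] := valP y.
pose c h := (rep (s h) == i) && (rep (t h) == j).
have c_inv h h' : fconnect aH h h' -> c h = c h'.
  move=> hh'; rewrite /c (orep.2 _ _ (fconnect_perm_morph s_aH hh')).
  by rewrite (orep.2 _ _ (fconnect_perm_morph t_aH hh')).
have -> : #|[set h | fconnect aI i (s h) & fconnect aI j (t h)]| = #|c|.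
  by apply: eq_card => h; rewrite inE !(fconnect_orbit_repr orep).
have -> : #|[set e : tH | fconnect ta x (tsrc e) & fconnect ta y (ttgt e)]|
          = #|[pred q | tH_pred q && c q.1.1]|.
  apply/esym/(@card_in_bij _ _ val) => [e e' _ _ /val_inj // | e | q].
    by rewrite !inE !fconnect_ta // (valP e).
  rewrite inE => /andP[tH_q cq]; exists (Sub q tH_q) => //.
  by rewrite !inE !fconnect_ta.
rewrite card_prod3_fibers big_distrl (card_invariant_orbit_sum ohrep c_inv) big_distrr.
rewrite [RHS]big_mkcond; apply: eq_bigr => h _ /=.
have [ch | nch] := boolP (c h); last first.
  by rewrite mul0n muln0 if_same eq_card0 // => zz; rewrite !inE /= andbF.
have /andP[/eqP shE /eqP thE] := ch.
case: ifP => [h_rep | ]; last first.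
  rewrite -[_ \in _]/(h \in hatH hrep) => h_nrep.
  by rewrite eq_card0 // => zz; rewrite !inE /tH_pred /= h_nrep.
rewrite !mul1n -thE -shE -(card_tH_fiber h_rep).
by congr (_ * _); apply: eq_card => zz; rewrite !inE /= andbT.
Qed.

End SplitQuotient.

Unset Implicit Arguments.
Set Strict Implicit.

Theorem lemma2p1 (I H : finType) (s t : H -> I) (bar : H -> H)
    (aI : {perm I}) (aH : {perm H}) (O : {set H})
    (rep : I -> I) (hrep : H -> H) (n : nat) (eta : algC) :
  is_graph s t bar -> no_loops s t ->
  admissible s t bar aI aH ->
  orientation bar O -> a_stable aH O -> no_oriented_cycles s t O ->
  common_multiple aI aH n ->
  (n.-primitive_root eta)%R ->
  orbit_repr aI rep -> orbit_repr aH hrep ->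
  forall x y : @tI I aI rep n eta,
    ssval (val x).2 = 1%R -> ssval (val y).2 = 1%R ->
    cartan (@tsrc I H s t aI aH rep hrep n eta) (@ttgt I H s t aI aH rep hrep n eta)
           (@ta I aI rep n eta) x y
    = cartan s t aI (val y).1 (val x).1.
Proof.
move=> [barK _ bar_s] _ [s_aH t_aH _ _] _ _ _ [_ dvdIn dvdHn] prim orep ohrep x y x1 y1.
have edges := card_tH_edges prim dvdIn dvdHn s_aH t_aH orep ohrep x1 y1.
rewrite /cartan (eq_tI_unit x1 y1); case: eqP => // _.
rewrite (order_ta prim dvdIn x1) (card_edges_reverse _ _ barK bar_s); congr (- _)%R.
apply/eqP; rewrite eqr_div ?pnatr_eq0 -?lt0n ?(eI_gt0 prim) ?fingraph.order_gt0 //.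
by rewrite -!natrM eqr_nat -/(dI aI _) edges mulnC.
Qed.
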